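(* Let $k,d>0$, $b,\tilde b\ge0$ be constants, and $\eta_1,\eta_2,c_1,c_2,\tilde c_1,\tilde c_2\ge0$; set $c_1^{tot}=\eta_1+c_1$, $c_2^{tot}=\eta_2+c_2$. Then the system $$\frac{dN_1}{dt}=-\big(k+c_1^{tot}N_1+c_2^{tot}N_2\big)N_1+bN_1+\tilde bN_2,$$ $$\frac{dN_2}{dt}=-\big(d+\tilde c_1N_1+\tilde c_2N_2\big)N_2+\big(k+\eta_1N_1+\eta_2N_2\big)N_1$$ has no periodic orbit lying entirely in $\mathbb{R}_+^2$. *)

From Stdlib Require Import Reals.
Open Scope R_scope.

Definition F1 (k b bt eta1 eta2 c1 c2 : R) (N1 N2 : R) : R :=
  - (k + (eta1 + c1) * N1 + (eta2 + c2) * N2) * N1 + b * N1 + bt * N2.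

Definition F2 (k d eta1 eta2 ct1 ct2 : R) (N1 N2 : R) : R :=
  - (d + ct1 * N1 + ct2 * N2) * N2 + (k + eta1 * N1 + eta2 * N2) * N1.

Definition is_solution (k d b bt eta1 eta2 c1 c2 ct1 ct2 : R)
    (N1 N2 : R -> R) : Prop :=
  forall t : R,
    derivable_pt_lim N1 t (F1 k b bt eta1 eta2 c1 c2 (N1 t) (N2 t)) /\
    derivable_pt_lim N2 t (F2 k d eta1 eta2 ct1 ct2 (N1 t) (N2 t)).

Definition is_periodic_orbit (k d b bt eta1 eta2 c1 c2 ct1 ct2 : R)
    (N1 N2 : R -> R) : Prop :=
  is_solution k d b bt eta1 eta2 c1 c2 ct1 ct2 N1 N2 /\
  (exists T : R, 0 < T /\ forall t, N1 (t + T) = N1 t /\ N2 (t + T) = N2 t) /\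
  (exists t1 t2 : R, N1 t1 <> N1 t2 \/ N2 t1 <> N2 t2).

Definition in_pos_quadrant (N1 N2 : R -> R) : Prop :=
  forall t : R, 0 <= N1 t /\ 0 <= N2 t.

From Stdlib Require Import Reals Lra Psatz Classical.
From Coquelicot Require Import Coquelicot.
Open Scope R_scope.

(* If a periodic orbit in the closed quadrant touches an axis, the derivative of the
   vanishing coordinate is zero there; this forces either the origin or [bt = 0], and
   a Gronwall bound plus periodicity makes the orbit stationary.  In the open quadrant
   we use the Dulac function [1 / (N1 N2)]: instead of Green's theorem it yields a
   function [V = Hdulac (N1, N2) - Gnull (N2)] that is nonincreasing along solutions
   and strictly decreasing off the nullcline [f2 = 0].  Being periodic, [V] is
   constant, so the orbit lies on the nullcline: [N2] is constant, hence so is [N1]. *)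

Definition periodic (f : R -> R) (T : R) : Prop := forall t, f (t + T) = f t.

Definition constant (f : R -> R) : Prop := forall t, f t = f 0.

Lemma nonpos_derive_nonincreasing (f l : R -> R) :
  (forall t, derivable_pt_lim f t (l t)) -> (forall t, l t <= 0) ->
  forall a c, a <= c -> f c <= f a.
Proof.
  intros f_derive l_le0 a c Hac.
  destruct (Req_dec a c) as [<- | Hne]; [lra |].
  destruct (MVT_cor2 f l a c) as [x [Hmvt _]]; [lra | intros; apply f_derive |].
  assert (l x * (c - a) <= 0) by (apply Rmult_le_0_r; [apply l_le0 | lra]).
  lra.
Qed.

Lemma nonneg_derive_at_zero (f : R -> R) t l :
  (forall s, 0 <= f s) -> f t = 0 -> derivable_pt_lim f t l -> l = 0.
Proof.
  intros f_ge0 ft0 Hl.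
  change (derive_pt f t (exist _ l Hl) = 0).
  apply (deriv_minimum f (t - 1) (t + 1)); [lra | lra |].
  intros s _ _. rewrite ft0. apply f_ge0.
Qed.

Section Periodic.
Variables (f : R -> R) (T : R).
Hypotheses (T_pos : 0 < T) (f_per : periodic f T).

Lemma periodic_shift (z : Z) t : f (t + IZR z * T) = f t.
Proof.
  induction z using Z.peano_ind.
  - now rewrite Rmult_0_l, Rplus_0_r.
  - rewrite succ_IZR, <- IHz, <- (f_per (t + IZR z * T)); f_equal; ring.
  - rewrite <- Z.sub_1_r, minus_IZR, <- IHz, <- (f_per (t + (IZR z - 1) * T)). f_equal; ring.
Qed.

Lemma periodic_shift_above a c : exists z, c <= a + IZR z * T.
Proof.
  destruct (archimed ((c - a) / T)) as [Hup _].
  exists (up ((c - a) / T)).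
  apply Rmult_gt_compat_r with (r := T) in Hup; [|lra].
  unfold Rdiv in Hup; rewrite Rmult_assoc, Rinv_l in Hup; lra.
Qed.

Lemma periodic_continuous_bounded :
  (forall t, continuity_pt f t) -> exists M, forall t, f t <= M.
Proof.
  intros f_cont.
  destruct (continuity_ab_maj f 0 T) as [tm [Htm _]]; [lra | intros; apply f_cont |].
  exists (f tm); intros t.
  destruct (base_Int_part (t / T)) as [Hlo Hhi].
  set (z := Int_part (t / T)) in *.
  assert (t / T * T = t) by (field; lra).
  rewrite <- (periodic_shift (- z) t), opp_IZR.
  apply Htm; nra.
Qed.

Variable l : R -> R.
Hypothesis f_derive : forall t, derivable_pt_lim f t (l t).

Lemma periodic_nonincreasing_constant : (forall t, l t <= 0) -> constant f.
Proof.
  intros l_le0.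
  assert (Hconst : forall a c, a <= c -> f c = f a).
  { intros a c Hac.
    destruct (periodic_shift_above a c) as [z Hz].
    pose proof (nonpos_derive_nonincreasing f l f_derive l_le0 a c Hac).
    pose proof (nonpos_derive_nonincreasing f l f_derive l_le0 c _ Hz).
    rewrite periodic_shift in *. lra. }
  intros t; destruct (Rle_dec 0 t); [apply Hconst | symmetry; apply Hconst]; lra.
Qed.

Lemma periodic_nonincreasing_derive0 : (forall t, l t <= 0) -> forall t, l t = 0.
Proof.
  intros l_le0 t.
  apply (uniqueness_limite f t); [apply f_derive |].
  apply derivable_pt_lim_ext with (fun _ => f 0); [| apply derivable_pt_lim_const].
  symmetry; apply (periodic_nonincreasing_constant l_le0).
Qed.

(* Gronwall: [f * exp (- M t)] is nonincreasing and nonnegative. *)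
Lemma periodic_gronwall_zero M t0 :
  (forall t, 0 <= f t) -> (forall t, l t <= M * f t) -> f t0 = 0 ->
  forall t, f t = 0.
Proof.
  intros f_ge0 l_le ft0.
  set (W := fun s => f s * exp (- M * s)).
  assert (W_derive : forall s, derivable_pt_lim W s ((l s - M * f s) * exp (- M * s))).
  { intros s. apply is_derive_Reals. unfold W.
    pose proof (proj2 (is_derive_Reals f s (l s)) (f_derive s)) as Hf.
    auto_derive; [now exists (l s) |].
    replace (Derive (fun x => f x) s) with (l s) by (symmetry; now apply is_derive_unique); ring. }
  assert (W_zero : forall s, t0 <= s -> f s = 0).
  { intros s Hs.
    assert (W s <= W t0).
    { apply (nonpos_derive_nonincreasing W _ W_derive); [| exact Hs].
      intros u. apply Rmult_le_0_r; [specialize (l_le u); lra | apply Rlt_le, exp_pos]. }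
    unfold W in H. rewrite ft0, Rmult_0_l in H.
    pose proof (exp_pos (- M * s)). pose proof (f_ge0 s). nra. }
  intros t. destruct (periodic_shift_above t t0) as [z Hz].
  rewrite <- (periodic_shift z t). now apply W_zero.
Qed.

End Periodic.

Section Model.
Variables k d b bt eta1 eta2 c1 c2 ct1 ct2 : R.
Hypotheses (k_pos : 0 < k) (d_pos : 0 < d) (b_ge0 : 0 <= b) (bt_ge0 : 0 <= bt)
  (eta1_ge0 : 0 <= eta1) (eta2_ge0 : 0 <= eta2) (c1_ge0 : 0 <= c1) (c2_ge0 : 0 <= c2)
  (ct1_ge0 : 0 <= ct1) (ct2_ge0 : 0 <= ct2).

Local Notation f1 := (F1 k b bt eta1 eta2 c1 c2).
Local Notation f2 := (F2 k d eta1 eta2 ct1 ct2).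

Lemma F1_add_F2_le x y : 0 <= x -> 0 <= y -> f1 x y + f2 x y <= (b + bt) * (x + y).
Proof.
  intros Hx Hy. unfold F1, F2.
  assert (0 <= c1 * (x * x)) by (apply Rmult_le_pos; nra).
  assert (0 <= (c2 + ct1) * (x * y)) by (apply Rmult_le_pos; nra).
  assert (0 <= ct2 * (y * y)) by (apply Rmult_le_pos; nra).
  nra.
Qed.

Lemma F1_le_bt0 x y : bt = 0 -> 0 <= x -> 0 <= y -> f1 x y <= b * x.
Proof.
  intros -> Hx Hy. unfold F1.
  assert (0 <= (eta1 + c1) * x) by (apply Rmult_le_pos; lra).
  assert (0 <= (eta2 + c2) * y) by (apply Rmult_le_pos; lra).
  nra.
Qed.

Lemma F2_N1_zero_le0 y : 0 <= y -> f2 0 y <= 0.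
Proof.
  intros Hy. unfold F2.
  assert (0 <= ct2 * y) by (apply Rmult_le_pos; lra).
  nra.
Qed.

Lemma F2_N2_zero_eq0 x : 0 <= x -> f2 x 0 = 0 -> x = 0.
Proof.
  intros Hx H0. unfold F2 in H0.
  assert (0 <= eta1 * x) by (apply Rmult_le_pos; lra).
  nra.
Qed.

(* [B = 1 / (x y)] is a Dulac function of the system.  [Hdulac] is chosen with
   [dHdulac/dx = B f2] and [Pdulac = B f1 + dHdulac/dy], so that [Hdulac] has
   derivative [Pdulac * f2] along solutions, while [dPdulac/dx = div (B (f1, f2))]
   is negative: the monotonicity of [Pdulac] in [x] replaces Green's theorem in
   Dulac's criterion. *)
Definition Hdulac x y :=
  - d * ln x - ct1 * x - ct2 * y * ln x + k * x / y + eta1 * x * x / (2 * y) + eta2 * x.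

Definition Pdulac x y :=
  (b - k) / y - (eta1 + c1) * x / y - (eta2 + c2) + bt / x - ct2 * ln x
  - k * x / (y * y) - eta1 * x * x / (2 * y * y).

Lemma Pdulac_decreasing x1 x2 y : 0 < x1 -> x1 < x2 -> 0 < y -> Pdulac x2 y < Pdulac x1 y.
Proof.
  intros Hx1 Hx12 Hy. unfold Pdulac.
  assert (ln x1 < ln x2) by (apply ln_increasing; lra).
  assert (0 < / y) by (apply Rinv_0_lt_compat; lra).
  assert ((eta1 + c1) * x1 / y <= (eta1 + c1) * x2 / y).
  { unfold Rdiv. apply Rmult_le_compat_r; nra. }
  assert (bt / x2 <= bt / x1).
  { unfold Rdiv. apply Rmult_le_compat_l; [lra | apply Rinv_le_contravar; lra]. }
  assert (k * x1 / (y * y) < k * x2 / (y * y)).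
  { unfold Rdiv. rewrite Rinv_mult. apply Rmult_lt_compat_r; nra. }
  assert (eta1 * x1 * x1 / (2 * y * y) <= eta1 * x2 * x2 / (2 * y * y)).
  { unfold Rdiv. apply Rmult_le_compat_r.
    - rewrite !Rinv_mult. nra.
    - assert (x1 * x1 <= x2 * x2) by nra. nra. }
  nra.
Qed.

Lemma Hdulac_derive (N1 N2 : R -> R) t :
  derivable_pt_lim N1 t (f1 (N1 t) (N2 t)) ->
  derivable_pt_lim N2 t (f2 (N1 t) (N2 t)) ->
  0 < N1 t -> 0 < N2 t ->
  is_derive (fun s => Hdulac (N1 s) (N2 s)) t (Pdulac (N1 t) (N2 t) * f2 (N1 t) (N2 t)).
Proof.
  intros H1 H2 Hx Hy.
  apply is_derive_Reals in H1, H2.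
  unfold Hdulac. auto_derive.
  - repeat split; try (eexists; eassumption); lra.
  - replace (Derive (fun s => N1 s) t) with (f1 (N1 t) (N2 t))
      by (symmetry; now apply is_derive_unique).
    replace (Derive (fun s => N2 s) t) with (f2 (N1 t) (N2 t))
      by (symmetry; now apply is_derive_unique).
    unfold Pdulac, F1, F2. field. lra.
Qed.

Definition beta c := k + (eta2 - ct1) * c.
Definition gam c := c * (d + ct2 * c).
Definition disc c := beta c * beta c + 4 * eta1 * gam c.

(* [f2 x c = eta1 x^2 + beta c x - gam c]; [zplus c] and [zminus c] are the roots of
   [gam c z^2 - beta c z - eta1], i.e. the reciprocals of the roots in [x]. *)
Definition zplus c := (beta c + sqrt (disc c)) / (2 * gam c).
Definition zminus c := (beta c - sqrt (disc c)) / (2 * gam c).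

Lemma gam_pos c : 0 < c -> 0 < gam c.
Proof. intros; unfold gam; nra. Qed.

Lemma disc_ge0 c : 0 < c -> 0 <= disc c.
Proof. intros; pose proof (gam_pos c H); unfold disc; nra. Qed.

Lemma F2_factor x c :
  0 < c -> f2 x c = gam c * (x * zplus c - 1) * (1 - x * zminus c).
Proof.
  intros Hc. pose proof (gam_pos c Hc).
  unfold zplus, zminus. field_simplify; [| lra].
  rewrite pow2_sqrt by exact (disc_ge0 c Hc).
  unfold F2, disc, beta, gam. field. nra.
Qed.

Lemma zminus_le0 c : 0 < c -> zminus c <= 0.
Proof.
  intros Hc. pose proof (gam_pos c Hc).
  assert (beta c <= sqrt (disc c)).
  { apply Rle_trans with (sqrt (Rsqr (beta c))).
    - rewrite sqrt_Rsqr_abs. apply Rle_abs.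
    - apply sqrt_le_1_alt. unfold Rsqr, disc. nra. }
  unfold zminus, Rdiv. apply Rmult_le_0_r; [lra |].
  apply Rlt_le, Rinv_0_lt_compat; lra.
Qed.

Lemma F2_root c x : 0 < c -> 0 <= x -> f2 x c = 0 -> x * zplus c = 1.
Proof.
  intros Hc Hx Hf2. rewrite F2_factor in Hf2 by exact Hc.
  pose proof (gam_pos c Hc). pose proof (zminus_le0 c Hc).
  assert (0 < 1 - x * zminus c) by nra.
  destruct (Rmult_integral _ _ Hf2) as [Hf2' | Hf2']; [| lra].
  destruct (Rmult_integral _ _ Hf2'); lra.
Qed.

(* The positive zero [1 / zplus c] of [f2 _ c], capped at [1 / eps] so that it
   stays defined and continuous where [zplus c <= 0] (no positive zero). *)
Definition xnull eps c := / Rmax (zplus c) eps.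

Definition gnull eps c := Pdulac (xnull eps c) c.

(* On [0 < x < 1 / eps], [f2 _ c] changes sign from negative to positive exactly
   at [xnull eps c], while [Pdulac _ c] decreases. *)
Lemma Pdulac_sub_gnull_mul_F2_lt0 eps x c :
  0 < eps -> 0 < x -> x * eps < 1 -> 0 < c -> f2 x c <> 0 ->
  (Pdulac x c - gnull eps c) * f2 x c < 0.
Proof.
  intros Heps Hx Hxeps Hc Hf2. unfold gnull, xnull.
  set (m := Rmax (zplus c) eps).
  assert (Hm_eps : eps <= m) by apply Rmax_r.
  assert (Hm_z : zplus c <= m) by apply Rmax_l.
  rewrite F2_factor in Hf2 |- * by exact Hc.
  pose proof (gam_pos c Hc) as Hgam.
  assert (Hminus : 0 < 1 - x * zminus c) by (pose proof (zminus_le0 c Hc); nra).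
  destruct (Rtotal_order (x * zplus c) 1) as [Hlt | [Heq | Hgt]].
  - assert (Hxm : x < / m).
    { assert (x * m < 1).
      { unfold m, Rmax; destruct (Rle_dec (zplus c) eps); lra. }
      apply Rmult_lt_reg_r with m; [lra |]. rewrite Rinv_l; lra. }
    pose proof (Pdulac_decreasing _ _ c Hx Hxm Hc).
    assert (0 < gam c * (1 - x * zplus c) * (1 - x * zminus c)).
    { apply Rmult_lt_0_compat; [apply Rmult_lt_0_compat |]; lra. }
    nra.
  - rewrite Heq in Hf2. lra.
  - assert (Hm : m = zplus c) by (apply Rmax_left; nra).
    rewrite Hm.
    assert (Hz : 0 < zplus c) by nra.
    assert (Hxz : / zplus c < x).
    { apply Rmult_lt_reg_r with (zplus c); [lra |]. rewrite Rinv_l; lra. }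
    pose proof (Pdulac_decreasing _ _ c (Rinv_0_lt_compat _ Hz) Hxz Hc).
    assert (0 < gam c * (x * zplus c - 1) * (1 - x * zminus c)).
    { apply Rmult_lt_0_compat; [apply Rmult_lt_0_compat |]; lra. }
    nra.
Qed.

Lemma zplus_continuous c : 0 < c -> continuity_pt zplus c.
Proof.
  intros Hc. pose proof (disc_ge0 c Hc). pose proof (gam_pos c Hc).
  unfold zplus, disc, gam, beta in *. reg. lra.
Qed.

Lemma xnull_pos eps c : 0 < eps -> 0 < xnull eps c.
Proof.
  intros Heps. apply Rinv_0_lt_compat, Rlt_le_trans with eps; [exact Heps | apply Rmax_r].
Qed.

Lemma xnull_continuous eps c : 0 < eps -> 0 < c -> continuity_pt (xnull eps) c.
Proof.
  intros Heps Hc. pose proof (zplus_continuous c Hc).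
  assert (Hmax : forall u, Rmax u eps = (u + eps + Rabs (u - eps)) / 2).
  { intros u. unfold Rmax. destruct (Rle_dec u eps).
    - rewrite Rabs_left1; lra.
    - rewrite Rabs_right; lra. }
  assert (Hm : 0 < Rmax (zplus c) eps)
    by (apply Rlt_le_trans with eps; [exact Heps | apply Rmax_r]).
  apply continuity_pt_ext with (fun c => / ((zplus c + eps + Rabs (zplus c - eps)) / 2)).
  { intros u. unfold xnull. now rewrite Hmax. }
  rewrite Hmax in Hm. reg. lra.
Qed.

Lemma gnull_continuous eps c : 0 < eps -> 0 < c -> continuous (gnull eps) c.
Proof.
  intros Heps Hc. apply continuity_pt_filterlim.
  pose proof (xnull_continuous eps c Heps Hc). pose proof (xnull_pos eps c Heps).
  assert (continuity_pt ln (xnull eps c)).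
  { apply derivable_continuous_pt. exists (/ xnull eps c). now apply derivable_pt_lim_ln. }
  unfold gnull, Pdulac. reg; nra.
Qed.

Definition Gnull eps c := RInt (gnull eps) 1 c.

Lemma Gnull_derive eps c : 0 < eps -> 0 < c -> is_derive (Gnull eps) c (gnull eps c).
Proof.
  intros Heps Hc. apply (is_derive_RInt (gnull eps) (Gnull eps) 1 c).
  - exists (mkposreal (c / 2) ltac:(lra)). intros y Hy.
    change (Rabs (y - c) < c / 2) in Hy. apply Rabs_def2 in Hy.
    apply (RInt_correct (gnull eps) 1 y), ex_RInt_continuous. intros z Hz.
    apply gnull_continuous; [exact Heps |].
    pose proof (Rmin_glb_lt 1 y 0 ltac:(lra) ltac:(lra)). lra.
  - now apply gnull_continuous.
Qed.

Section Orbit.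
Variables (N1 N2 : R -> R) (T : R).
Hypotheses (sol : is_solution k d b bt eta1 eta2 c1 c2 ct1 ct2 N1 N2) (T_pos : 0 < T)
  (N_per : forall t, N1 (t + T) = N1 t /\ N2 (t + T) = N2 t)
  (N_quad : in_pos_quadrant N1 N2).

Let N1_derive t : derivable_pt_lim N1 t (f1 (N1 t) (N2 t)) := proj1 (sol t).
Let N2_derive t : derivable_pt_lim N2 t (f2 (N1 t) (N2 t)) := proj2 (sol t).
Let N1_per : periodic N1 T := fun t => proj1 (N_per t).
Let N2_per : periodic N2 T := fun t => proj2 (N_per t).
Let N1_ge0 t : 0 <= N1 t := proj1 (N_quad t).
Let N2_ge0 t : 0 <= N2 t := proj2 (N_quad t).

Lemma orbit_origin_constant t0 : N1 t0 = 0 -> N2 t0 = 0 -> constant N1 /\ constant N2.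
Proof.
  intros H1 H2.
  set (S := fun s => N1 s + N2 s).
  assert (S_per : periodic S T) by (intros s; unfold S; now rewrite N1_per, N2_per).
  assert (S_derive : forall s, derivable_pt_lim S s (f1 (N1 s) (N2 s) + f2 (N1 s) (N2 s)))
    by (intros s; apply derivable_pt_lim_plus; auto).
  assert (S_zero : forall t, S t = 0).
  { apply (periodic_gronwall_zero S T T_pos S_per _ S_derive (b + bt) t0).
    - intros s; unfold S; pose proof (N1_ge0 s); pose proof (N2_ge0 s); lra.
    - intros s; apply F1_add_F2_le; auto.
    - unfold S; lra. }
  assert (N_zero : forall t, N1 t = 0 /\ N2 t = 0).
  { intros t. pose proof (S_zero t). pose proof (N1_ge0 t). pose proof (N2_ge0 t).
    unfold S in *; lra. }
  split; intros t; destruct (N_zero t), (N_zero 0); congruence.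
Qed.

Lemma orbit_N1_zero_constant t0 : N1 t0 = 0 -> constant N1 /\ constant N2.
Proof.
  intros H1.
  pose proof (nonneg_derive_at_zero N1 t0 _ N1_ge0 H1 (N1_derive t0)) as Hf1.
  rewrite H1 in Hf1. unfold F1 in Hf1.
  assert (Hbt : bt * N2 t0 = 0) by lra.
  destruct (Rmult_integral _ _ Hbt) as [bt0 | H2]; [| now apply (orbit_origin_constant t0)].
  assert (N1_zero : forall t, N1 t = 0).
  { apply (periodic_gronwall_zero N1 T T_pos N1_per _ N1_derive b t0 N1_ge0); [| exact H1].
    intros s; apply F1_le_bt0; auto. }
  split; [intros t; now rewrite !N1_zero |].
  apply (periodic_nonincreasing_constant N2 T T_pos N2_per _ N2_derive).
  intros s; rewrite N1_zero; apply F2_N1_zero_le0; auto.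
Qed.

Lemma orbit_N2_zero_constant t0 : N2 t0 = 0 -> constant N1 /\ constant N2.
Proof.
  intros H2.
  pose proof (nonneg_derive_at_zero N2 t0 _ N2_ge0 H2 (N2_derive t0)) as Hf2.
  rewrite H2 in Hf2.
  apply (orbit_origin_constant t0); [now apply F2_N2_zero_eq0 | exact H2].
Qed.

Section Interior.
Hypothesis N_pos : forall t, 0 < N1 t /\ 0 < N2 t.

Lemma interior_orbit_on_nullcline t : f2 (N1 t) (N2 t) = 0.
Proof.
  destruct (periodic_continuous_bounded N1 T T_pos N1_per
              (fun s => derivable_continuous_pt _ _ (exist _ _ (N1_derive s)))) as [X HX].
  assert (HX1 : 0 < X + 1) by (pose proof (HX 0); pose proof (N_pos 0); lra).
  set (eps := / (X + 1)).
  assert (Heps : 0 < eps) by (apply Rinv_0_lt_compat; lra).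
  assert (N1_eps : forall s, N1 s * eps < 1).
  { intros s. apply Rmult_lt_reg_r with (X + 1); [lra |].
    unfold eps; rewrite Rmult_assoc, Rinv_l by lra. pose proof (HX s); lra. }
  set (V := fun s => Hdulac (N1 s) (N2 s) - Gnull eps (N2 s)).
  set (D := fun s => (Pdulac (N1 s) (N2 s) - gnull eps (N2 s)) * f2 (N1 s) (N2 s)).
  assert (V_derive : forall s, derivable_pt_lim V s (D s)).
  { intros s. apply is_derive_Reals. destruct (N_pos s) as [Hx Hy].
    replace (D s) with (Pdulac (N1 s) (N2 s) * f2 (N1 s) (N2 s)
                        - f2 (N1 s) (N2 s) * gnull eps (N2 s)) by (unfold D; ring).
    apply (is_derive_minus (fun s => Hdulac (N1 s) (N2 s)) (fun s => Gnull eps (N2 s))).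
    - now apply Hdulac_derive.
    - apply (is_derive_comp (Gnull eps) N2); [now apply Gnull_derive |].
      apply is_derive_Reals, N2_derive. }
  assert (D_neg : forall s, f2 (N1 s) (N2 s) <> 0 -> D s < 0).
  { intros s Hs. destruct (N_pos s). now apply Pdulac_sub_gnull_mul_F2_lt0. }
  assert (D_le0 : forall s, D s <= 0).
  { intros s. destruct (Req_dec (f2 (N1 s) (N2 s)) 0) as [H0 | H0].
    - unfold D; rewrite H0; lra.
    - now apply Rlt_le, D_neg. }
  assert (V_per : periodic V T) by (intros s; unfold V; now rewrite N1_per, N2_per).
  destruct (Req_dec (f2 (N1 t) (N2 t)) 0) as [H0 | H0]; [exact H0 |].
  pose proof (periodic_nonincreasing_derive0 V T T_pos V_per D V_derive D_le0 t).
  pose proof (D_neg t H0). lra.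
Qed.

Lemma interior_orbit_constant : constant N1 /\ constant N2.
Proof.
  assert (N2_const : constant N2).
  { apply (periodic_nonincreasing_constant N2 T T_pos N2_per _ N2_derive).
    intros s; rewrite interior_orbit_on_nullcline; lra. }
  split; [| exact N2_const].
  assert (Hroot : forall t, N1 t * zplus (N2 0) = 1).
  { intros t. destruct (N_pos 0), (N_pos t).
    apply F2_root; [lra | lra |]. rewrite <- (N2_const t). apply interior_orbit_on_nullcline. }
  intros t. apply Rmult_eq_reg_r with (zplus (N2 0)).
  - now rewrite !Hroot.
  - intros Hz. pose proof (Hroot 0) as H0. rewrite Hz in H0. lra.
Qed.

End Interior.

Lemma nonneg_periodic_orbit_constant : constant N1 /\ constant N2.
Proof.
  destruct (classic (exists t0, N1 t0 = 0 \/ N2 t0 = 0)) as [[t0 [H0 | H0]] | N_nonzero].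
  - exact (orbit_N1_zero_constant t0 H0).
  - exact (orbit_N2_zero_constant t0 H0).
  - apply interior_orbit_constant. intros t.
    destruct (N1_ge0 t) as [H1 | H1], (N2_ge0 t) as [H2 | H2];
      [now split | exfalso; apply N_nonzero; exists t; auto ..].
Qed.

End Orbit.

End Model.

Theorem theorem4 (k d b bt eta1 eta2 c1 c2 ct1 ct2 : R) :
  0 < k -> 0 < d -> 0 <= b -> 0 <= bt ->
  0 <= eta1 -> 0 <= eta2 -> 0 <= c1 -> 0 <= c2 -> 0 <= ct1 -> 0 <= ct2 ->
  ~ (exists N1 N2 : R -> R,
       is_periodic_orbit k d b bt eta1 eta2 c1 c2 ct1 ct2 N1 N2 /\
       in_pos_quadrant N1 N2).
Proof.
  intros k_pos d_pos b_ge0 bt_ge0 eta1_ge0 eta2_ge0 c1_ge0 c2_ge0 ct1_ge0 ct2_ge0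
    [N1 [N2 [[sol [[T [T_pos N_per]] [t1 [t2 N_nonconst]]]] N_quad]]].
  assert (N_const : constant N1 /\ constant N2)
    by (apply (nonneg_periodic_orbit_constant k d b bt eta1 eta2 c1 c2 ct1 ct2) with T;
        assumption).
  destruct N_const as [N1_const N2_const].
  rewrite (N1_const t1), (N1_const t2), (N2_const t1), (N2_const t2) in N_nonconst.
  tauto.
Qed.
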